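(* Let $(L,\vee,\wedge,\to,\gets,f,g,0,1)$ be an HBGC-algebra. Then there exists a GC-frame $\mathcal{F}=(X,\leq,R)$ such that $(L,\vee,\wedge,\to,\gets,f,g,0,1)$ is isomorphic to a subalgebra of the complex algebra $\mathbb{HB}_{\rm GC}(\mathcal{F})=(\mathcal{T}_\leq,\cup,\cap,\to,\gets,{}^\blacktriangle,{}^\blacktriangledown,\emptyset,X)$.
   Context: A Heyting–Brouwer algebra $(L,\vee,\wedge,\to,\gets,0,1)$ is a bounded lattice in which for all $a,b$ the relative pseudocomplement $a\to b$ (greatest $x$ with $a\wedge x\leq b$) and the co-implication $a\gets b$ (least $x$ with $b\leq a\vee x$) exist. An HBGC-algebra is a Heyting–Brouwer algebra with maps $f,g\colon L\to L$ forming an order-preserving Galois connection ($f(a)\leq b\iff a\leq g(b)$). A GC-frame $(X,\leq,R)$ is a set $X$ with a quasiorder $\leq$ and a relation $R\subseteq X\times X$ such that $x\leq x'$, $x\,R\,y$, $y'\leq y$ imply $x'\,R\,y'$. $\mathcal{T}_\leq$ is the set of upward $\leq$-closed subsets of $X$. For $A\subseteq X$: $A^\blacktriangle=\{x\mid x\,R\,y\text{ for some }y\in A\}$, $A^\blacktriangledown=\{x\mid y\,R\,x\text{ implies }y\in A\}$. On $\mathcal{T}_\leq$: $A\to B=\{a\in X\mid \forall b\geq a\,(b\in A\Rightarrow b\in B)\}$, $A\gets B=\{a\in X\mid \exists b\leq a\,(b\notin A\text{ and }b\in B)\}$. Isomorphisms preserve $\vee,\wedge,\to,\gets,f,g,0,1$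 with $f\leftrightarrow{}^\blacktriangle$, $g\leftrightarrow{}^\blacktriangledown$. *)

From mathcomp Require Import all_boot all_order.
Set Implicit Arguments. Unset Strict Implicit. Unset Printing Implicit Defensive.
Import Order.Theory.
Local Open Scope order_scope.

Definition is_rel_pseudocompl d (L : latticeType d) (imp : L -> L -> L) :=
  forall a b x : L, (a `&` x <= b) = (x <= imp a b).

Definition is_coimplication d (L : latticeType d) (coimp : L -> L -> L) :=
  forall a b x : L, (b <= a `|` x) = (coimp a b <= x).

Definition order_preserving d (L : latticeType d) (f : L -> L) :=
  forall a b : L, a <= b -> f a <= f b.

Definition galois_connection d (L : latticeType d) (f g : L -> L) :=
  forall a b : L, (f a <= b) = (a <= g b).

Definition quasiorder (X : Type) (le : X -> X -> Prop) :=
  (forall x, le x x) /\ (forall x y z, le x y -> le y z -> le x z).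

Definition GC_frame_cond (X : Type) (le R : X -> X -> Prop) :=
  forall x x' y y', le x x' -> R x y -> le y' y -> R x' y'.

Definition upset (X : Type) (le : X -> X -> Prop) (A : X -> Prop) :=
  forall x y, le x y -> A x -> A y.

Definition set_eq (X : Type) (A B : X -> Prop) := forall x, A x <-> B x.

Definition fimp (X : Type) (le : X -> X -> Prop) (A B : X -> Prop) : X -> Prop :=
  fun a => forall b, le a b -> A b -> B b.

Definition fcoimp (X : Type) (le : X -> X -> Prop) (A B : X -> Prop) : X -> Prop :=
  fun a => exists b, le b a /\ ~ A b /\ B b.

Definition blackup (X : Type) (R : X -> X -> Prop) (A : X -> Prop) : X -> Prop :=
  fun x => exists y, R x y /\ A y.

Definition blackdown (X : Type) (R : X -> X -> Prop) (A : X -> Prop) : X -> Prop :=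
  fun x => forall y, R y x -> A y.

(* Stone–Priestley style representation.  L is distributive because [imp] is a
   relative pseudocomplement, so by the prime filter theorem every a </= b is
   witnessed by a prime filter containing a but not b.  The frame is the set of
   prime filters, ordered by inclusion, with F R G iff G is contained in the
   preimage of F under f; an element a is sent to the set of prime filters
   containing it.  Each operation is preserved because the missing prime filter
   can always be produced by separating a suitable filter from a suitable
   ideal: for [imp] and g the filter is the image of F under a ⊓ _ resp. f, for
   [coimp] and f the ideal is the image of the complement of F under a ⊔ _
   resp. g. *)
From mathcomp Require Import all_boot all_order.
From mathcomp Require classical_sets.
From Stdlib Require Import Classical.
Set Implicit Arguments. Unset Strict Implicit. Unset Printing Implicit Defensive.
Import Order.Theory.
Local Open Scope order_scope.

Section Filters.
Variables (d : Order.disp_t) (L : tbLatticeType d).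
Implicit Types (F J M : L -> Prop) (phi : L -> L).

Definition is_filter F := [/\ F \top,
  forall x y, x <= y -> F x -> F y & forall x y, F x -> F y -> F (x `&` y)].

Definition is_ideal J := [/\ J \bot,
  forall x y, x <= y -> J y -> J x & forall x y, J x -> J y -> J (x `|` y)].

Definition is_prime_filter F :=
  [/\ is_filter F, ~ F \bot & forall x y, F (x `|` y) -> F x \/ F y].

Definition maximal_filter_avoiding J M := forall B, is_filter B ->
  (forall x, B x -> ~ J x) -> (forall x, M x -> B x) -> forall x, B x -> M x.

Definition meet_distributive :=
  forall m x y : L, m `&` (x `|` y) <= (m `&` x) `|` (m `&` y).

Lemma principal_filter (a : L) : is_filter (fun x => a <= x).
Proof.
split=> [|x y xy ax|x y ax ay]; first exact: lex1; first exact: le_trans xy.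
by rewrite lexI ax ay.
Qed.

Lemma principal_ideal (b : L) : is_ideal (fun x => x <= b).
Proof.
split=> [|x y xy yb|x y xb yb]; first exact: le0x; first exact: le_trans yb.
by rewrite leUx xb yb.
Qed.

Lemma filter_up_image phi F : order_preserving phi -> is_filter F ->
  is_filter (fun u => exists2 c, F c & phi c <= u).
Proof.
move=> phi_mono [Ftop _ Fmeet]; split.
- by exists \top; rewrite ?lex1.
- by move=> x y xy [c Fc cx]; exists c; last exact: le_trans xy.
- move=> x y [c Fc cx] [c' Fc' cy]; exists (c `&` c'); first exact: Fmeet.
  rewrite lexI (le_trans (phi_mono _ _ (leIl _ _)) cx).
  by rewrite (le_trans (phi_mono _ _ (leIr _ _)) cy).
Qed.

Lemma ideal_down_image phi J : order_preserving phi -> is_ideal J ->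
  is_ideal (fun u => exists2 i, J i & u <= phi i).
Proof.
move=> phi_mono [Jbot _ Jjoin]; split.
- by exists \bot; rewrite ?le0x.
- by move=> x y xy [i Ji yi]; exists i; last exact: le_trans yi.
- move=> x y [i Ji xi] [i' Ji' yi]; exists (i `|` i'); first exact: Jjoin.
  rewrite leUx (le_trans xi (phi_mono _ _ (leUl _ _))).
  by rewrite (le_trans yi (phi_mono _ _ (leUr _ _))).
Qed.

Lemma prime_filter_compl_ideal F : is_prime_filter F -> is_ideal (fun x => ~ F x).
Proof.
move=> [[_ Fup _] Fbot Fjoin]; split=> // [x y xy nFy Fx|x y nFx nFy /Fjoin[]//].
exact/nFy/(Fup x).
Qed.

Lemma filter_chain_union F0 (C : (L -> Prop) -> Prop) :
  is_filter F0 -> (forall X, C X -> is_filter (fun x => X x \/ F0 x)) ->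
  classical_sets.total_on C classical_sets.subset ->
  is_filter (fun x => (exists2 X, C X & X x) \/ F0 x).
Proof.
move=> [F0top F0up F0meet] CF Ctot; split; first by right.
- move=> x y xy [[X CX Xx]|F0x]; last by right; exact: F0up xy F0x.
  have [_ Xup _] := CF X CX.
  by case: (Xup x y xy (or_introl Xx)); [left; exists X|right].
- have meet_in Z x y : C Z -> Z x \/ F0 x -> Z y \/ F0 y ->
      (exists2 X, C X & X (x `&` y)) \/ F0 (x `&` y).
    move=> CZ Hx Hy; have [_ _ Zmeet] := CF Z CZ.
    by case: (Zmeet x y Hx Hy); [left; exists Z|right].
  move=> x y [[X CX Xx]|F0x] [[Y CY Yy]|F0y].
  + case: (Ctot X Y CX CY) => [XY|YX].
    * by apply: (meet_in Y) => //; left => //; exact: XY.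
    * by apply: (meet_in X) => //; left => //; exact: YX.
  + by apply: (meet_in X) => //; [left|right].
  + by apply: (meet_in Y) => //; [right|left].
  + by right; exact: F0meet.
Qed.

Lemma exists_maximal_filter F0 J : is_filter F0 -> (forall x, F0 x -> ~ J x) ->
  exists M, [/\ is_filter M, forall x, F0 x -> M x, forall x, M x -> ~ J x &
    maximal_filter_avoiding J M].
Proof.
move=> F0filter F0J.
(* Filters above F0 are encoded as [A ∪ F0], so that the empty chain is admissible. *)
pose P A := is_filter (fun x => A x \/ F0 x) /\ forall x, A x \/ F0 x -> ~ J x.
have [|A [[Afilter AJ] Amax]] := @classical_sets.Zorn_bigcup L P.
  move=> C CP Ctot; split; first exact: filter_chain_union (fun X CX => (CP X CX).1) Ctot.
  by move=> x [[X CX Xx]|F0x]; [exact: (CP X CX).2 x (or_introl Xx)|exact: F0J].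
exists (fun x => A x \/ F0 x); split=> //; first by right.
move=> B Bfilter BJ AB x Bx; apply: NNPP => nABx.
have PB : P B.
  have BF0 y : B y \/ F0 y -> B y by case=> // /or_intror/AB.
  have [Btop Bup Bmeet] := Bfilter.
  split=> [|y /BF0]; last exact: BJ.
  by split=> [|u v uv /BF0 Bu|u v /BF0 Bu /BF0 Bv]; left; [|exact: Bup Bu|exact: Bmeet].
by apply: (Amax B _ PB); split=> [y Ay|BA]; [apply: AB; left|apply/nABx; left; exact: BA].
Qed.

Section Distributive.
Hypothesis distr : meet_distributive.

Lemma maximal_disjoint_filter_prime M J : is_filter M -> is_ideal J ->
  (forall x, M x -> ~ J x) -> maximal_filter_avoiding J M -> is_prime_filter M.
Proof.
move=> Mfilter [Jbot Jdown Jjoin] MJ Mmax; have [Mtop Mup Mmeet] := Mfilter.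
split=> // [/MJ//|x y Mxy]; apply: NNPP => /not_or_and[nMx nMy].
have meet_in_ideal z : ~ M z -> exists2 m, M m & J (m `&` z).
  move=> nMz; apply: NNPP => nJ; apply/nMz/(Mmax (fun u => exists2 c, M c & c `&` z <= u)).
  - by apply: filter_up_image Mfilter => u v uv; apply: leI2.
  - move=> u [c Mc cu] Ju; apply: nJ; exists c => //; exact: Jdown Ju.
  - by move=> u Mu; exists u; rewrite ?leIl.
  - by exists \top; rewrite ?meet1x.
have [m Mm Jmx] := meet_in_ideal x nMx.
have [m' Mm' Jmy] := meet_in_ideal y nMy.
apply: (MJ (m `&` m' `&` (x `|` y))); first exact: Mmeet (Mmeet _ _ Mm Mm') Mxy.
apply: (Jdown _ _ (distr _ _ _)); apply: Jjoin.
- by apply: Jdown Jmx; apply: leI2 => //; exact: leIl.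
- by apply: Jdown Jmy; apply: leI2 => //; exact: leIr.
Qed.

Theorem prime_filter_separation F0 J : is_filter F0 -> is_ideal J ->
  (forall x, F0 x -> ~ J x) ->
  exists G, [/\ is_prime_filter G, forall x, F0 x -> G x & forall x, G x -> ~ J x].
Proof.
move=> F0filter Jideal F0J.
have [M [Mfilter F0M MJ Mmax]] := exists_maximal_filter F0filter F0J.
exists M; split=> //; exact: (maximal_disjoint_filter_prime Mfilter Jideal MJ Mmax).
Qed.

Lemma prime_filter_separation_le (a b : L) : ~ a <= b ->
  exists G, [/\ is_prime_filter G, G a & ~ G b].
Proof.
move=> nab; have [|G [Gprime aG Gb]] := prime_filter_separation
  (principal_filter a) (principal_ideal b).
  by move=> x ax xb; apply/nab/(le_trans ax).
by exists G; split=> //; [exact: aG|move/Gb; rewrite lexx].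
Qed.

End Distributive.

Lemma rel_pseudocompl_meet_distributive (imp : L -> L -> L) :
  is_rel_pseudocompl imp -> meet_distributive.
Proof.
by move=> Himp m x y; rewrite Himp leUx -!Himp leUl leUr.
Qed.

End Filters.

Section Representation.
Variables (d : Order.disp_t) (L : tbLatticeType d).
Variables (imp coimp : L -> L -> L) (f g : L -> L).
Hypothesis distr : meet_distributive L.
Hypotheses (Himp : is_rel_pseudocompl imp) (Hcoimp : is_coimplication coimp).
Hypotheses (Hf : order_preserving f) (Hg : order_preserving g).
Hypothesis Hfg : galois_connection f g.

Definition prime_filter := {F : L -> Prop | is_prime_filter F}.

Definition prime_filter_incl (F G : prime_filter) := forall x, sval F x -> sval G x.

Definition prime_filter_rel (F G : prime_filter) := forall x, sval G x -> sval F (f x).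

Definition stone (a : L) (F : prime_filter) := sval F a.

Local Notation le := prime_filter_incl.
Local Notation R := prime_filter_rel.

Lemma prime_filter_incl_quasiorder : quasiorder le.
Proof. by split=> [F x|F G H FG GH x /FG/GH]. Qed.

Lemma prime_filter_GC_frame : GC_frame_cond le R.
Proof. by move=> F F' G G' FF' FG G'G x /G'G/FG/FF'. Qed.

Lemma stone_upset a : upset le (stone a).
Proof. by move=> F G /(_ a). Qed.

Lemma stone_inj a b : set_eq (stone a) (stone b) -> a = b.
Proof.
have stone_le x y : set_eq (stone x) (stone y) -> x <= y.
  move=> xy; apply: NNPP => /(prime_filter_separation_le distr)[G [Gprime Gx nGy]].
  exact/nGy/(xy (exist _ G Gprime)).
move=> ab; apply: le_anti; rewrite !stone_le //.
by move=> F; split=> /ab.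
Qed.

Lemma stone_join a b : set_eq (stone (a `|` b)) (fun F => stone a F \/ stone b F).
Proof.
move=> [F [[_ Fup _] _ Fjoin]] /=; rewrite /stone /=; split; first exact: Fjoin.
by case=> [/(Fup a)|/(Fup b)]; apply; rewrite ?leUl ?leUr.
Qed.

Lemma stone_meet a b : set_eq (stone (a `&` b)) (fun F => stone a F /\ stone b F).
Proof.
move=> [F [[_ Fup Fmeet] _ _]] /=; rewrite /stone /=; split; last by case; apply: Fmeet.
by move=> Fab; split; apply: (Fup (a `&` b)); rewrite ?leIl ?leIr.
Qed.

Lemma stone_bot : set_eq (stone \bot) (fun _ => False).
Proof. by move=> [F [_ Fbot _]] /=. Qed.

Lemma stone_top : set_eq (stone \top) (fun _ => True).
Proof. by move=> [F [[Ftop _ _] _ _]] /=. Qed.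

Lemma stone_imp a b : set_eq (stone (imp a b)) (fimp le (stone a) (stone b)).
Proof.
move=> [F Fprime]; have [Ffilter _ _] := Fprime; have [Ftop Fup _] := Ffilter.
rewrite /stone /=; split.
  move=> Fab [G Gprime] FG Ga; have [[_ Gup Gmeet] _ _] := Gprime; have Gab := FG _ Fab.
  by apply: (Gup (a `&` imp a b)); [rewrite Himp|exact: Gmeet].
move=> Hab; apply: NNPP => nFab.
have [|G [Gprime FG Gb]] := prime_filter_separation distr
  (filter_up_image (fun x y => leI2 (lexx a)) Ffilter)
  (principal_ideal b).
  move=> z [c Fc acz] zb; apply/nFab/(Fup c) => //.
  by rewrite -Himp; exact: le_trans acz zb.
apply: (Gb b) => //; apply: (Hab (exist _ G Gprime)) => /=.
- by move=> x Fx; apply: FG; exists x; rewrite ?leIr.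
- by apply: FG; exists \top; rewrite ?leIl.
Qed.

Lemma stone_coimp a b : set_eq (stone (coimp a b)) (fcoimp le (stone a) (stone b)).
Proof.
move=> [F Fprime]; have [[_ Fup _] Fbot _] := Fprime; rewrite /stone /=; split.
  move=> Fab; have [|G [Gprime bG GJ]] := prime_filter_separation distr
    (principal_filter b) (ideal_down_image (fun x y => leU2 (lexx a))
      (prime_filter_compl_ideal Fprime)).
    move=> z bz [i nFi zi]; apply/nFi/(Fup (coimp a b)) => //.
    by rewrite -Hcoimp; exact: le_trans bz zi.
  exists (exist _ G Gprime); split; [|split] => /=.
  - by move=> x Gx; apply: NNPP => nFx; apply: (GJ x Gx); exists x; rewrite ?leUr.
  - by move=> Ga; apply: (GJ a Ga); exists \bot; rewrite ?leUl.
  - exact: bG.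
move=> [[G Gprime] [/= GF [nGa Gb]]]; have [[_ Gup _] _ Gjoin] := Gprime.
apply: GF; case: (Gjoin a (coimp a b)) => //.
by apply: (Gup b); rewrite ?Hcoimp.
Qed.

Lemma stone_f a : set_eq (stone (f a)) (blackup R (stone a)).
Proof.
move=> [F Fprime]; have [[_ Fup _] _ _] := Fprime; rewrite /stone /=; split; last first.
  by move=> [G [FG Ga]]; exact: FG.
move=> Ffa; have [|G [Gprime aG GJ]] := prime_filter_separation distr
  (principal_filter a) (ideal_down_image Hg (prime_filter_compl_ideal Fprime)).
  move=> z az [i nFi zi]; apply/nFi/(Fup (f a)) => //.
  by rewrite Hfg; exact: le_trans az zi.
exists (exist _ G Gprime); split => /=.
- by move=> x Gx; apply: NNPP => nFfx; apply: (GJ x Gx); exists (f x); rewrite -?Hfg.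
- exact: aG.
Qed.

Lemma stone_g a : set_eq (stone (g a)) (blackdown R (stone a)).
Proof.
move=> [F Fprime]; have [Ffilter _ _] := Fprime; have [_ Fup _] := Ffilter.
rewrite /stone /=; split.
  move=> Fga [G Gprime] FG; have [[_ Gup _] _ _] := Gprime.
  by apply: (Gup (f (g a))); [rewrite Hfg|exact: FG].
move=> Hga; apply: NNPP => nFga.
have [|G [Gprime FG Ga]] := prime_filter_separation distr
  (filter_up_image Hf Ffilter) (principal_ideal a).
  move=> z [c Fc fcz] za; apply/nFga/(Fup c) => //.
  by rewrite -Hfg; exact: le_trans fcz za.
apply: (Ga a) => //; apply: (Hga (exist _ G Gprime)) => x Fx /=.
by apply: FG; exists x.
Qed.

End Representation.

Theorem proposition4p3 (d : Order.disp_t) (L : tbLatticeType d)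
    (imp coimp : L -> L -> L) (f g : L -> L)
    (Himp : is_rel_pseudocompl imp) (Hcoimp : is_coimplication coimp)
    (Hf : order_preserving f) (Hg : order_preserving g)
    (Hfg : galois_connection f g) :
  exists (X : Type) (le R : X -> X -> Prop),
    quasiorder le /\ GC_frame_cond le R /\
    exists h : L -> (X -> Prop),
      (forall a, upset le (h a)) /\
      (forall a b, set_eq (h a) (h b) -> a = b) /\
      (forall a b, set_eq (h (a `|` b)) (fun x => h a x \/ h b x)) /\
      (forall a b, set_eq (h (a `&` b)) (fun x => h a x /\ h b x)) /\
      (forall a b, set_eq (h (imp a b)) (fimp le (h a) (h b))) /\
      (forall a b, set_eq (h (coimp a b)) (fcoimp le (h a) (h b))) /\
      (forall a, set_eq (h (f a)) (blackup R (h a))) /\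
      (forall a, set_eq (h (g a)) (blackdown R (h a))) /\
      set_eq (h \bot) (fun _ => False) /\
      set_eq (h \top) (fun _ => True).
Proof.
have distr := rel_pseudocompl_meet_distributive Himp.
exists (prime_filter L), (@prime_filter_incl d L), (prime_filter_rel f).
split; first exact: prime_filter_incl_quasiorder.
split; first exact: prime_filter_GC_frame.
exists (@stone d L).
split; first exact: stone_upset.
split; first exact: stone_inj distr.
split; first exact: stone_join.
split; first exact: stone_meet.
split; first exact: stone_imp distr Himp.
split; first exact: stone_coimp distr Hcoimp.
split; first exact: stone_f distr Hg Hfg.
split; first exact: stone_g distr Hf Hfg.
split; [exact: stone_bot|exact: stone_top].
Qed.
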